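(* Let $F$ be a field of characteristic $2$ and let $K=F(\lambda)$ be a separable extension with $\lambda\neq0$ and $[K:F]=n$. Let $f(X)=X^n+a_1X^{n-1}+\dots+a_n$ be the minimal polynomial of $\lambda$ over $F$, and let $a=a_k$ for some odd $k\in\{1,\dots,n\}$ with $a_k\neq0$ (such a $k$ exists). Let $s:K\to F$ be the $F$-linear functional with $s(1)=1$ and $s(\lambda^i)=0$ for $1\le i\le n-1$. Let $\phi,\psi$ be totally singular quadratic forms over $F$ with $\phi_K\cong\lambda\psi_K$. Then $G_F^0(\phi)=G_F^0(\psi)$ and $G_F^0(\phi,\psi)=aG_F^0(\psi)$. For every integer $m\ge0$, - $s(\lambda^m)\in G_F^0(\psi)$ if $m$ is even; - $s(\lambda^m)\in G_F^0(\phi,\psi)$ if $m$ is odd. Moreover, $$\phi\sim s_*(\phi_K)\cong s_*(\lambda\psi_K)\sim a\psi .$$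
   Context: Transfer: for a quadratic form $\phi$ on a $K$-vector space $V$, $s_*(\phi)=s\circ\phi$ on $V$ regarded as an $F$-vector space. For forms of equal dimension, $G_F(\phi,\psi)=\{c\in F^*:\phi\cong c\psi\}$, $G_F(\psi)=G_F(\psi,\psi)$, and $G^0_F(\cdot)=G_F(\cdot)\cup\{0\}$. A totally singular quadratic form is one isometric to $\sum a_ix_i^2$. Its anisotropic part is obtained by removing a maximal zero subform $\langle0,\dots,0\rangle$, and $\sim$ denotes Witt equivalence, i.e. isometry of anisotropic parts. *)

From HB Require Import structures.
From mathcomp Require Import all_boot all_order all_algebra all_field.
Set Implicit Arguments. Unset Strict Implicit. Unset Printing Implicit Defensive.
Import GRing.Theory.
Local Open Scope ring_scope.

Section QuadForms.
Variable R : fieldType.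

Definition qiso (V W : vectType R) (q1 : V -> R) (q2 : W -> R) : Prop :=
  exists f : {linear V -> W}, bijective f /\ forall v, q2 (f v) = q1 v.

Definition qscale (V : vectType R) (c : R) (q : V -> R) : V -> R :=
  fun v => c * q v.

Definition qsum (V W : vectType R) (q1 : V -> R) (q2 : W -> R) : V * W -> R :=
  fun p => q1 p.1 + q2 p.2.

Definition qzero (i : nat) : 'rV[R]_i -> R := fun _ => 0.

Definition anisotropic (V : vectType R) (q : V -> R) : Prop :=
  forall v, q v = 0 -> v = 0.

Definition witt_equiv (V W : vectType R) (q1 : V -> R) (q2 : W -> R) : Prop :=
  exists (e i j : nat) (rho : 'rV[R]_e -> R),
    [/\ anisotropic rho, qiso q1 (qsum rho (@qzero i))
      & qiso q2 (qsum rho (@qzero j))].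

Definition G0 (V W : vectType R) (q1 : V -> R) (q2 : W -> R) (c : R) : Prop :=
  c = 0 \/ (c != 0 /\ qiso q1 (qscale c q2)).

Definition ts_form (d : nat) (a : 'rV[R]_d) : 'rV[R]_d -> R :=
  fun x => \sum_(i < d) a 0 i * x 0 i ^+ 2.
End QuadForms.

Definition ts_ext (F : fieldType) (L : fieldExtType F) (d : nat)
  (a : 'rV[F]_d) : {ffun 'I_d -> L} -> L :=
  fun x => \sum_(i < d) in_alg L (a 0 i) * x i ^+ 2.

Definition transfer (F : fieldType) (L : fieldExtType F) (V : Type)
  (s : L -> F) (q : V -> L) : V -> F := fun v => s (q v).

From HB Require Import structures.
From mathcomp Require Import all_boot all_order all_algebra all_field.
From Stdlib Require Import Classical.
Import GRing.Theory.
Local Open Scope ring_scope.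
Set Implicit Arguments. Unset Strict Implicit. Unset Printing Implicit Defensive.

(* Lemma 6.4 (phi_K ~= lam psi_K for totally singular phi, psi over F of
   characteristic 2, K = F(lam) separable) is read off from value sets D(q),
   which are F^2-subspaces since q(x + y) = q x + q y and q(c x) = c^2 q x.
   (1) q ~= q_an _|_ <0,..,0> with q_an anisotropic and D(q_an) = D(q), and
       anisotropic forms with equal value sets are isometric; so Witt
       equivalence, isometry and G^0 are all determined by value sets.
   (2) K = F(lam^2), and x is in D(b_K) iff its (lam^2)-coordinates are in D(b).
   (3) With E = {t | t D(psi) <= D(psi)}, a field containing F^2, the
       hypothesis gives mu with D(phi) = mu D(psi) and mu^-1 lam in E(lam^2);
       Cramer's rule on the powers of mu^-1 lam puts the i-th lam-coordinate
       of lam^m in mu^(m-i) E, whence s(lam^m) in mu^m E and a in mu^k E = mu E.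
   (4) So D(phi) = a D(psi) and both transfers have value set D(phi). *)

Section Char2.
Variable R : comNzRingType.
Hypothesis ch2 : 2%N \in [pchar R].

Lemma sqrrD_char2 (x y : R) : (x + y) ^+ 2 = x ^+ 2 + y ^+ 2.
Proof. by rewrite sqrrD -mulr_natr (pcharf0 ch2) mulr0 addr0. Qed.

Lemma oppr_char2 (x : R) : - x = x.
Proof.
apply/eqP; rewrite eq_sym -subr_eq0 opprK -mulr2n -mulr_natr.
by rewrite (pcharf0 ch2) mulr0.
Qed.
End Char2.

Section Isometry.
Variable F : fieldType.

Lemma linear_of (V W : vectType F) (f : V -> W) :
  (forall a x y, f (a *: x + y) = a *: f x + f y) ->
  exists g : {linear V -> W}, forall x, g x = f x.
Proof.
move=> H.
pose g : {linear V -> W} := HB.pack f (GRing.isLinear.Build _ _ _ _ f H).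
by exists g.
Qed.

Lemma qiso_refl (V : vectType F) (q : V -> F) : qiso q q.
Proof.
have [h Hh] : exists h : {linear V -> V}, forall x, h x = x by apply: linear_of.
by exists h; split; [exists id => x; rewrite Hh | move=> v; rewrite Hh].
Qed.

Lemma qiso_sym (V W : vectType F) (q1 : V -> F) (q2 : W -> F) :
  qiso q1 q2 -> qiso q2 q1.
Proof.
move=> [f [[g fK gK] Hf]].
have [h Hh] : exists h : {linear W -> V}, forall x, h x = g x.
  by apply: linear_of => a x y; apply: (can_inj fK); rewrite linearP /= !gK.
exists h; split; first by exists f => x; rewrite Hh ?fK ?gK.
by move=> v; rewrite Hh -Hf gK.
Qed.

Lemma qiso_trans (U V W : vectType F) (q1 : U -> F) (q2 : V -> F) (q3 : W -> F) :
  qiso q1 q2 -> qiso q2 q3 -> qiso q1 q3.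
Proof.
move=> [f [[f' fK f'K] Hf]] [g [[g' gK g'K] Hg]].
have [h Hh] : exists h : {linear U -> W}, forall x, h x = g (f x).
  by apply: linear_of => a x y; rewrite !linearP.
exists h; split; last by move=> v; rewrite Hh Hg Hf.
by exists (fun w => f' (g' w)) => x; rewrite ?Hh ?gK ?fK ?f'K ?g'K.
Qed.

Lemma qiso_eqr (V W : vectType F) (q1 : V -> F) (q2 q2' : W -> F) :
  q2 =1 q2' -> qiso q1 q2 -> qiso q1 q2'.
Proof. by move=> e [f [bf Hf]]; exists f; split => // v; rewrite -e. Qed.

Lemma qiso_sumr (V V' W : vectType F) (q1 : V -> F) (q1' : V' -> F) (q2 : W -> F) :
  qiso q1 q1' -> qiso (qsum q1 q2) (qsum q1' q2).
Proof.
move=> [f [[f' fK f'K] Hf]].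
have [h Hh] : exists h : {linear (V * W)%type -> (V' * W)%type},
    forall x, h x = (f x.1, x.2).
  by apply: linear_of => a [x1 x2] [y1 y2] /=; rewrite linearP.
exists h; split; last by move=> [v w]; rewrite Hh /qsum /= Hf.
by exists (fun x => (f' x.1, x.2)) => -[x1 x2]; rewrite ?Hh /= ?fK ?f'K.
Qed.

Lemma qiso_mx m n (b : 'rV[F]_m -> F) (c : 'rV[F]_n -> F) (M : 'M[F]_(m, n))
  (N : 'M[F]_(n, m)) :
  M *m N = 1%:M -> N *m M = 1%:M -> (forall x, b x = c (x *m M)) -> qiso b c.
Proof.
move=> MN NM H.
have [h Hh] : exists h : {linear 'rV[F]_m -> 'rV[F]_n}, forall x, h x = x *m M.
  by apply: linear_of => a x y; rewrite mulmxDl scalemxAl.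
exists h; split; last by move=> v; rewrite Hh H.
by exists (fun y => y *m N) => x; rewrite ?Hh -mulmxA ?MN ?NM mulmx1.
Qed.

Lemma linear_inj_dim m1 m2 (g : {linear 'rV[F]_m1 -> 'rV[F]_m2}) :
  injective g -> (m1 <= m2)%N.
Proof.
move=> ig; have : row_free (lin1_mx g).
  rewrite -kermx_eq0; apply/eqP/row_matrixP => i; rewrite row0.
  by apply: ig; rewrite linear0 -mul_rV_lin1 -row_mul mulmx_ker row0.
by rewrite /row_free => /eqP <-; exact: rank_leq_col.
Qed.

Lemma qiso_dim m1 m2 (q1 : 'rV[F]_m1 -> F) (q2 : 'rV[F]_m2 -> F) :
  qiso q1 q2 -> m1 = m2.
Proof.
move=> I; have [f [[g fK _] _]] := I; have [f' [[g' fK' _] _]] := qiso_sym I.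
by apply/eqP; rewrite eqn_leq (linear_inj_dim (can_inj fK))
  (linear_inj_dim (can_inj fK')).
Qed.

Lemma witt_equiv_sym (V W : vectType F) (q1 : V -> F) (q2 : W -> F) :
  witt_equiv q1 q2 -> witt_equiv q2 q1.
Proof. by move=> [e [i [j [rho [an I1 I2]]]]]; exists e, j, i, rho. Qed.

Lemma witt_qisor (V W W' : vectType F) (q1 : V -> F) (q2 : W -> F) (q2' : W' -> F) :
  witt_equiv q1 q2 -> qiso q2' q2 -> witt_equiv q1 q2'.
Proof.
move=> [e [i [j [rho [an I1 I2]]]]] I; exists e, i, j, rho; split => //.
exact: qiso_trans I I2.
Qed.

Lemma witt_qisol (V V' W : vectType F) (q1 : V -> F) (q1' : V' -> F) (q2 : W -> F) :
  witt_equiv q1 q2 -> qiso q1' q1 -> witt_equiv q1' q2.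
Proof.
move=> [e [i [j [rho [an I1 I2]]]]] I; exists e, i, j, rho; split => //.
exact: qiso_trans I I1.
Qed.

Definition represents (V : Type) (q : V -> F) (z : F) : Prop := exists v, z = q v.

Lemma qiso_represents (V W : vectType F) (q1 : V -> F) (q2 : W -> F) :
  qiso q1 q2 -> forall z, represents q1 z <-> represents q2 z.
Proof.
move=> [f [[g fK gK] Hf]] z; split => [[v ->]|[w ->]]; first by exists (f v).
by exists (g w); rewrite -Hf gK.
Qed.
End Isometry.

Section TotallySingular.
Variable F : fieldType.
Hypothesis ch2 : 2%N \in [pchar F].
Local Notation D := (@represents F _).

Lemma tsD d (b x y : 'rV[F]_d) : ts_form b (x + y) = ts_form b x + ts_form b y.
Proof.
rewrite /ts_form -big_split; apply: eq_bigr => i _.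
by rewrite mxE sqrrD_char2 // mulrDr.
Qed.

Lemma tsZ d (b x : 'rV[F]_d) c : ts_form b (c *: x) = c ^+ 2 * ts_form b x.
Proof.
by rewrite /ts_form mulr_sumr; apply: eq_bigr => i _; rewrite mxE exprMn mulrCA.
Qed.

Lemma ts0 d (b : 'rV[F]_d) : ts_form b 0 = 0.
Proof. by rewrite /ts_form big1 // => i _; rewrite mxE expr0n mulr0. Qed.

Lemma ts_sum d (b : 'rV[F]_d) m (G : 'I_m -> 'rV[F]_d) :
  ts_form b (\sum_i G i) = \sum_i ts_form b (G i).
Proof. by apply: (big_morph (ts_form b)); [exact: tsD | exact: ts0]. Qed.

Lemma ts_row m n (b1 x1 : 'rV[F]_m) (b2 x2 : 'rV[F]_n) :
  ts_form (row_mx b1 b2) (row_mx x1 x2) = ts_form b1 x1 + ts_form b2 x2.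
Proof.
rewrite /ts_form big_split_ord /=.
by congr (_ + _); apply: eq_bigr => i _; rewrite !(row_mxEl, row_mxEr).
Qed.

Lemma ts1 (b u : 'rV[F]_1) : ts_form b u = b 0 0 * u 0 0 ^+ 2.
Proof. by rewrite /ts_form big_ord1. Qed.

Lemma ts_scale d (b : 'rV[F]_d) c : qscale c (ts_form b) =1 ts_form (c *: b).
Proof.
move=> x; rewrite /qscale /ts_form mulr_sumr.
by apply: eq_bigr => i _; rewrite mxE mulrA.
Qed.

Lemma represents0 d (b : 'rV[F]_d) : D (ts_form b) 0.
Proof. by exists 0; rewrite ts0. Qed.

Lemma representsD d (b : 'rV[F]_d) z1 z2 :
  D (ts_form b) z1 -> D (ts_form b) z2 -> D (ts_form b) (z1 + z2).
Proof. by move=> [x ->] [y ->]; exists (x + y); rewrite tsD. Qed.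

Lemma representsZ d (b : 'rV[F]_d) t z :
  D (ts_form b) z -> D (ts_form b) (t ^+ 2 * z).
Proof. by move=> [x ->]; exists (t *: x); rewrite tsZ. Qed.

Lemma represents_sum d (b : 'rV[F]_d) m (G : 'I_m -> F) :
  (forall i, D (ts_form b) (G i)) -> D (ts_form b) (\sum_i G i).
Proof.
move=> H; apply: (big_ind (D (ts_form b))) => //.
  exact: represents0.
exact: representsD.
Qed.

Lemma represents_coef d (b : 'rV[F]_d) i : D (ts_form b) (b 0 i).
Proof.
exists (delta_mx 0 i); rewrite /ts_form (bigD1 i) //= big1 ?addr0.
  by rewrite mxE !eqxx expr1n mulr1.
by move=> j /negPf nji; rewrite mxE nji /= expr0n mulr0.
Qed.

Lemma represents_qscale (V : vectType F) (q : V -> F) c z :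
  D (qscale c q) z <-> exists2 v, D q v & z = c * v.
Proof.
split; first by move=> [x ->]; exists (q x) => //; exists x.
by move=> [v [x ->] ->]; exists x.
Qed.

Lemma ts_factor e r (b : 'rV[F]_e) (c : 'rV[F]_r) :
  (forall i, D (ts_form c) (b 0 i)) ->
  exists Y : 'M[F]_(e, r), forall x, ts_form b x = ts_form c (x *m Y).
Proof.
move=> H; have [g Hg] := fin_all_exists H.
exists (\matrix_i g i) => x; rewrite mulmx_sum_row ts_sum /ts_form.
by apply: eq_bigr => i _; rewrite -/(ts_form _ _) tsZ rowK -Hg mulrC.
Qed.

Lemma aniso_row_free e r (b : 'rV[F]_e) (c : 'rV[F]_r) (Y : 'M[F]_(e, r)) :
  anisotropic (ts_form b) -> (forall x, ts_form b x = ts_form c (x *m Y)) ->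
  row_free Y.
Proof.
move=> an HY; rewrite -kermx_eq0; apply/eqP/row_matrixP => i; rewrite row0.
by apply: an; rewrite HY -row_mul mulmx_ker row0 ts0.
Qed.

Lemma aniso_dim_le e r (b : 'rV[F]_e) (c : 'rV[F]_r) :
  anisotropic (ts_form b) -> (forall i, D (ts_form c) (b 0 i)) -> (e <= r)%N.
Proof.
move=> an /ts_factor[Y HY]; have := aniso_row_free an HY.
by rewrite /row_free => /eqP <-; exact: rank_leq_col.
Qed.

Lemma aniso_unitmx e (b c : 'rV[F]_e) :
  anisotropic (ts_form b) -> (forall z, D (ts_form b) z -> D (ts_form c) z) ->
  exists2 Y : 'M[F]_e, Y \in unitmx & forall x, ts_form b x = ts_form c (x *m Y).
Proof.
move=> anb sub.
have [Y HY] := ts_factor (fun i => sub _ (represents_coef b i)).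
by exists Y => //; rewrite -row_free_unit; exact: aniso_row_free HY.
Qed.

(* Adjoining to an anisotropic c a coefficient that c does not represent keeps
   it anisotropic (as -1 = 1, a zero of <b0> _|_ c exhibits b0 in D(c)). *)
Lemma aniso_row_mx e (b0 : 'rV[F]_1) (c : 'rV[F]_e) :
  anisotropic (ts_form c) -> ~ D (ts_form c) (b0 0 0) ->
  anisotropic (ts_form (row_mx b0 c)).
Proof.
move=> anc nI z; rewrite -[z]hsubmxK ts_row ts1.
set z0 := lsubmx z 0 0; set zr := rsubmx z.
have [z00|z0n] := eqVneq z0 0.
  rewrite z00 expr0n mulr0 add0r => /anc ->.
  have -> : lsubmx z = 0 by apply/rowP => i; rewrite ord1 [RHS]mxE; exact: z00.
  by rewrite row_mx0.
move=> H; exfalso; apply: nI; exists (z0^-1 *: zr).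
rewrite tsZ; move/eqP: H; rewrite addr_eq0 oppr_char2 // => /eqP <-.
by rewrite exprVn mulrCA mulVf ?mulr1 // expf_neq0.
Qed.

Lemma ts_aniso_factor d (b : 'rV[F]_d) : exists e (c : 'rV[F]_e) (Y : 'M[F]_(d, e))
  (Yi : 'M[F]_(e, d)), [/\ anisotropic (ts_form c), Yi *m Y = 1%:M
     & forall x, ts_form b x = ts_form c (x *m Y)].
Proof.
elim: d b => [|d IH] b.
  exists 0%N, 0, 0, 0; split.
  - by move=> v _; rewrite [v]thinmx0.
  - by rewrite [LHS]flatmx0 [RHS]flatmx0.
  - by move=> x; rewrite /ts_form !big_ord0.
move: b; change (forall b : 'rV[F]_(1 + d), exists e (c : 'rV[F]_e)
  (Y : 'M[F]_(1 + d, e)) (Yi : 'M[F]_(e, 1 + d)), [/\ anisotropic (ts_form c),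
   Yi *m Y = 1%:M & forall x, ts_form b x = ts_form c (x *m Y)]).
move=> b; rewrite -[b]hsubmxK; set b0 := lsubmx b; set br := rsubmx b.
have [e [c [Y [Yi [anc YiY HY]]]]] := IH br.
have Hb x : ts_form (row_mx b0 br) x =
    b0 0 0 * lsubmx x 0 0 ^+ 2 + ts_form c (rsubmx x *m Y).
  by rewrite -{1}[x]hsubmxK ts_row ts1 HY.
case: (classic (D (ts_form c) (b0 0 0))) => [[y0 Hy0]|nI].
  exists e, c, (col_mx y0 Y), (row_mx 0 Yi); split => //.
    by rewrite mul_row_col mul0mx add0r.
  move=> x; rewrite Hb -[x in RHS]hsubmxK mul_row_col tsD.
  have -> : lsubmx x *m y0 = lsubmx x 0 0 *: y0.
    by rewrite {1}[lsubmx x]mx11_scalar mul_scalar_mx.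
  by rewrite tsZ -Hy0 mulrC.
exists (1 + e)%N, (row_mx b0 c), (block_mx 1%:M 0 0 Y), (block_mx 1%:M 0 0 Yi).
split; first exact: aniso_row_mx.
  by rewrite mulmx_block !mulmx0 !mul0mx !addr0 !add0r mulmx1 YiY -scalar_mx_block.
move=> x; rewrite Hb -[x in RHS]hsubmxK mul_row_block !mulmx0 !mulmx1 addr0 add0r.
by rewrite ts_row ts1.
Qed.

Lemma ts_factor_represents d e (b : 'rV[F]_d) (c : 'rV[F]_e) Y (Yi : 'M[F]_(e, d)) :
  Yi *m Y = 1%:M -> (forall x, ts_form b x = ts_form c (x *m Y)) ->
  forall z, D (ts_form b) z <-> D (ts_form c) z.
Proof.
move=> YiY H z; split=> [[x ->]|[y ->]]; first by exists (x *m Y).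
by exists (y *m Yi); rewrite H -mulmxA YiY mulmx1.
Qed.

Lemma ts_factor_qiso d e (b : 'rV[F]_d) (c : 'rV[F]_e) Y (Yi : 'M[F]_(e, d)) :
  Yi *m Y = 1%:M -> (forall x, ts_form b x = ts_form c (x *m Y)) ->
  exists i, (e + i = d)%N /\ qiso (ts_form b) (qsum (ts_form c) (@qzero F i)).
Proof.
move=> YiY H.
have rY : \rank Y = e.
  apply/eqP; rewrite eqn_leq rank_leq_col /=.
  by rewrite -{1}(mxrank1 F e) -YiY mxrankM_maxr.
set B := row_base (kermx Y); exists (\rank (kermx Y)); split.
  by rewrite mxrank_ker rY subnKC // -rY rank_leq_row.
(* x splits as its image x Y and its kernel component x P, P = 1 - Y Yi *)
set P := 1%:M - Y *m Yi; set Z := pinvmx B.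
have BY : B *m Y = 0 by apply/sub_kermxP; rewrite eq_row_base.
have PY : P *m Y = 0 by rewrite mulmxBl mul1mx -mulmxA YiY mulmx1 subrr.
have BZ : B *m Z = 1%:M by rewrite mulmxVp // row_base_free.
have [h Hh] : exists h : {linear 'rV[F]_d ->
                           ('rV[F]_e * 'rV[F]_(\rank (kermx Y)))%type},
    forall x, h x = (x *m Y, x *m P *m Z).
  by apply: linear_of => a x y; rewrite !mulmxDl -!scalemxAl.
exists h; split; last by move=> v; rewrite Hh /qsum /qzero /= H addr0.
exists (fun u => u.1 *m Yi + u.2 *m B) => [x|[u v]]; rewrite ?Hh /=.
  have xP : (x *m P <= B)%MS.
    by rewrite eq_row_base; apply/sub_kermxP; rewrite -mulmxA PY mulmx0.
  by rewrite (mulmxKpV xP) /P mulmxBr mulmx1 mulmxA addrC subrK.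
congr (_, _).
  by rewrite mulmxDl -(mulmxA u Yi Y) -(mulmxA v B Y) YiY BY mulmx0 addr0 mulmx1.
rewrite !mulmxDl /P !mulmxBr !mulmx1 (mulmxA (u *m Yi)) -(mulmxA u Yi Y) YiY.
rewrite mulmx1 subrr mul0mx add0r (mulmxA (v *m B)) -(mulmxA v B Y) BY mulmx0.
by rewrite mul0mx subr0 -mulmxA BZ mulmx1.
Qed.

Lemma ts_anisotropic_part d (b : 'rV[F]_d) : exists e (c : 'rV[F]_e) i,
  [/\ anisotropic (ts_form c), (e + i = d)%N,
      (forall z, D (ts_form b) z <-> D (ts_form c) z)
    & qiso (ts_form b) (qsum (ts_form c) (@qzero F i))].
Proof.
have [e [c [Y [Yi [an YiY H]]]]] := ts_aniso_factor b.
have [i [ei iso]] := ts_factor_qiso YiY H.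
by exists e, c, i; split => //; exact: ts_factor_represents YiY H.
Qed.

Lemma aniso_dim_eq e1 e2 (c1 : 'rV[F]_e1) (c2 : 'rV[F]_e2) :
  anisotropic (ts_form c1) -> anisotropic (ts_form c2) ->
  (forall z, D (ts_form c1) z <-> D (ts_form c2) z) -> e1 = e2.
Proof.
move=> a1 a2 eq; apply/eqP; rewrite eqn_leq.
rewrite (aniso_dim_le a1 (fun i => proj1 (eq _) (represents_coef c1 i))).
by rewrite (aniso_dim_le a2 (fun i => proj2 (eq _) (represents_coef c2 i))).
Qed.

Lemma aniso_qiso e (c1 c2 : 'rV[F]_e) :
  anisotropic (ts_form c1) ->
  (forall z, D (ts_form c1) z <-> D (ts_form c2) z) ->
  qiso (ts_form c1) (ts_form c2).
Proof.
move=> a1 eq; have [Y uY HY] := aniso_unitmx a1 (fun z => proj1 (eq z)).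
by apply: (qiso_mx (N := invmx Y)) HY; rewrite ?mulmxV ?mulVmx.
Qed.

Lemma ts_common_aniso d1 d2 (b1 : 'rV[F]_d1) (b2 : 'rV[F]_d2) :
  (forall z, D (ts_form b1) z <-> D (ts_form b2) z) ->
  exists e (c : 'rV[F]_e) i1 i2, [/\ anisotropic (ts_form c),
    (e + i1 = d1)%N, (e + i2 = d2)%N,
    qiso (ts_form b1) (qsum (ts_form c) (@qzero F i1))
  & qiso (ts_form b2) (qsum (ts_form c) (@qzero F i2))].
Proof.
move=> eq.
have [e1 [c1 [i1 [a1 s1 E1 I1]]]] := ts_anisotropic_part b1.
have [e2 [c2 [i2 [a2 s2 E2 I2]]]] := ts_anisotropic_part b2.
have E z : D (ts_form c2) z <-> D (ts_form c1) z by rewrite -E1 -E2 eq.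
have ee := aniso_dim_eq a2 a1 E; subst e2.
exists e1, c1, i1, i2; split => //.
exact: qiso_trans I2 (qiso_sumr _ (aniso_qiso a2 E)).
Qed.

Lemma ts_witt_equiv d1 d2 (b1 : 'rV[F]_d1) (b2 : 'rV[F]_d2) :
  (forall z, D (ts_form b1) z <-> D (ts_form b2) z) ->
  witt_equiv (ts_form b1) (ts_form b2).
Proof.
move=> /ts_common_aniso [e [c [i1 [i2 [an _ _ I1 I2]]]]].
by exists e, i1, i2, (ts_form c).
Qed.

Lemma ts_qiso d1 d2 (b1 : 'rV[F]_d1) (b2 : 'rV[F]_d2) :
  d1 = d2 -> (forall z, D (ts_form b1) z <-> D (ts_form b2) z) ->
  qiso (ts_form b1) (ts_form b2).
Proof.
move=> dd /ts_common_aniso [e [c [i1 [i2 [an s1 s2 I1 I2]]]]].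
have ii : i1 = i2 by apply/eqP; rewrite -(eqn_add2l e) s1 s2 dd.
by subst i2; apply: qiso_trans I1 (qiso_sym I2).
Qed.

Lemma quasilinear_ts (V : vectType F) (q : V -> F) :
  (forall x y, q (x + y) = q x + q y) -> (forall c x, q (c *: x) = c ^+ 2 * q x) ->
  exists b : 'rV[F]_(\dim {:V}), qiso q (ts_form b).
Proof.
move=> qD qZ; set X := vbasis {:V}.
have q0 : q 0 = 0 by have := qZ 0 0; rewrite scale0r expr0n mul0r.
exists (\row_i q X`_i).
have [h Hh] : exists h : {linear V -> 'rV[F]_(\dim {:V})},
    forall v, h v = \row_i coord X i v.
  by apply: linear_of => a x y; apply/rowP => i; rewrite !mxE linearP.
exists h; split.
  exists (fun r : 'rV[F]_(\dim {:V}) => \sum_i r 0 i *: X`_i) => [v|r].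
    rewrite Hh [RHS](coord_vbasis (memvf v)).
    by apply: eq_bigr => i _; rewrite mxE.
  rewrite Hh; apply/rowP => i.
  by rewrite mxE coord_sum_free ?(basis_free (vbasisP _)).
move=> v; rewrite Hh {2}(coord_vbasis (memvf v)) (big_morph q qD q0) /ts_form.
by apply: eq_bigr => i _; rewrite !mxE qZ mulrC.
Qed.

Lemma quasilinear_witt (V : vectType F) (q : V -> F) d (b : 'rV[F]_d) :
  (forall x y, q (x + y) = q x + q y) -> (forall c x, q (c *: x) = c ^+ 2 * q x) ->
  (forall z, D q z <-> D (ts_form b) z) -> witt_equiv q (ts_form b).
Proof.
move=> qD qZ eq; have [b' iso] := quasilinear_ts qD qZ.
apply: (witt_qisol _ iso); apply: ts_witt_equiv => z.
by rewrite -(qiso_represents iso) eq.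
Qed.

Lemma multiplier_onto d (b : 'rV[F]_d) t : t != 0 ->
  (forall z, D (ts_form b) z -> D (ts_form b) (t * z)) ->
  forall z, D (ts_form b) z -> exists2 u, D (ts_form b) u & z = t * u.
Proof.
move=> t0 st z.
have [e [c [i [an _ E _]]]] := ts_anisotropic_part b.
have tc x : ts_form (t *: c) x = t * ts_form c x by rewrite -ts_scale.
have an' : anisotropic (ts_form (t *: c)).
  by move=> x; rewrite tc => /eqP; rewrite mulf_eq0 (negPf t0) /= => /eqP /an.
have sub z' : D (ts_form (t *: c)) z' -> D (ts_form c) z'.
  by move=> [x ->]; rewrite tc; apply/E/st/E; exists x.
have [Y uY HY] := aniso_unitmx an' sub.
move=> /E [y ->]; exists (ts_form c (y *m invmx Y)).
  by apply/E; exists (y *m invmx Y).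
by rewrite -tc HY mulmxKV.
Qed.

Lemma multiplier_eq d (b : 'rV[F]_d) c : c != 0 ->
  (forall z, D (ts_form b) z <-> exists2 v, D (ts_form b) v & z = c * v) <->
  (forall v, D (ts_form b) v -> D (ts_form b) (c * v)).
Proof.
move=> c0; split => [H v Hv|H z]; first by apply/H; exists v.
by split; [exact: multiplier_onto | move=> [v Hv ->]; exact: H].
Qed.

Lemma G0_ts d1 d2 (b1 : 'rV[F]_d1) (b2 : 'rV[F]_d2) c : d1 = d2 ->
  G0 (ts_form b1) (ts_form b2) c <-> c = 0 \/ (c != 0 /\
     forall z, D (ts_form b1) z <-> exists2 v, D (ts_form b2) v & z = c * v).
Proof.
move=> dd; split => [[->|[c0 I]]|[->|[c0 I]]]; [by left| |by left|].
  by right; split => // z; rewrite -represents_qscale; exact: qiso_represents I z.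
right; split => //; apply: qiso_eqr (fun x => esym (ts_scale b2 c x)) _.
apply: ts_qiso => // z; rewrite I -represents_qscale.
by split => -[x ->]; exists x; rewrite ts_scale.
Qed.
End TotallySingular.

Section PowerBasis.
Variables (F : fieldType) (L : fieldExtType F) (n : nat).
Hypothesis dimL : \dim {:L} = n.

Definition pow_basis (y : L) : n.-tuple L := [tuple y ^+ i | i < n].

Lemma pow_basisE y (i : 'I_n) : (pow_basis y)`_i = y ^+ i.
Proof. by rewrite nth_mktuple. Qed.

Lemma adjoin_degree_gen (y : L) : <<1; y>>%VS = fullv -> adjoin_degree 1 y = n.
Proof. by move=> gy; rewrite adjoin_degreeE gy dimv1 divn1 -dimL. Qed.

Lemma n_gt0 (y : L) : <<1; y>>%VS = fullv -> (0 < n)%N.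
Proof. by move=> gy; rewrite -(adjoin_degree_gen gy). Qed.

(* A nontrivial F-relation among 1, .., y^(n-1) would give a polynomial of
   degree < n over F vanishing at y, contradicting deg minPoly = n. *)
Lemma pow_basisP (y : L) : <<1; y>>%VS = fullv -> basis_of fullv (pow_basis y).
Proof.
move=> gy; rewrite basisEfree subvf size_tuple dimL leqnn !andbT.
apply/freeP => k Hk i.
pose kn (j : nat) := odflt 0 (omap k (insub j)).
have knE (j : 'I_n) : kn j = k j by rewrite /kn valK.
pose p := \poly_(i < n) (kn i)%:A : {poly L}.
have pO : p \is a polyOver 1%VS.
  apply/polyOverP => j; rewrite coef_poly; case: ifP => _; last exact: mem0v.
  by rewrite rpredZ // mem1v.
have rp : root p y.
  rewrite /root horner_poly; apply/eqP; rewrite -[RHS]Hk.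
  by apply: eq_bigr => j _; rewrite knE pow_basisE mulr_algl.
have p0 : p = 0.
  apply/eqP; apply: contraT => pn0.
  have := dvdp_leq pn0 (minPoly_dvdp pO rp).
  by rewrite size_minPoly adjoin_degree_gen // ltnNge (leq_trans (size_poly _ _)).
have := congr1 (fun q : {poly L} => q`_i) p0.
rewrite coef_poly ltn_ord coef0 knE => /eqP.
by rewrite scaler_eq0 oner_eq0 orbF => /eqP.
Qed.

Section Generator.
Variable y : L.
Hypothesis gy : <<1; y>>%VS = fullv.
Local Notation crd := (coord (pow_basis y)).

Lemma pow_expand (x : L) : x = \sum_i crd i x *: y ^+ i.
Proof.
rewrite {1}(coord_basis (pow_basisP gy) (memvf x)).
by apply: eq_bigr => i _; rewrite pow_basisE.
Qed.

Lemma pow_coord (k : 'I_n -> F) j : crd j (\sum_i k i *: y ^+ i) = k j.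
Proof.
rewrite -(coord_sum_free k j (basis_free (pow_basisP gy))).
by congr coord; apply: eq_bigr => i _; rewrite pow_basisE.
Qed.

Lemma pow_coord_inj (x x' : L) : (forall i, crd i x = crd i x') -> x = x'.
Proof.
move=> H; rewrite (pow_expand x) (pow_expand x').
by apply: eq_bigr => i _; rewrite H.
Qed.

Lemma pow_coord_alg (c : F) j : crd j c%:A = c * (val j == 0%N)%:R.
Proof.
have n0 := n_gt0 gy.
have -> : c%:A = \sum_(i < n) (c * (val i == 0%N)%:R) *: y ^+ i.
  rewrite (bigD1 (Ordinal n0)) //= big1 ?addr0 ?eqxx ?mulr1 ?expr0 //.
  move=> i ni; have -> : (val i == 0%N) = false.
    by apply/negbTE; apply: contra ni => /eqP e; apply/eqP/val_inj.
  by rewrite mulr0 scale0r.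
by rewrite pow_coord.
Qed.

Lemma pow_coord_neq0 (x : L) : x != 0 -> exists j, crd j x != 0.
Proof.
move=> x0; case: (pickP (fun j => crd j x != 0)) => [j Hj|H]; first by exists j.
move: x0; rewrite (pow_expand x) big1 ?eqxx //.
by move=> i _; move: (H i) => /negbFE /eqP ->; rewrite scale0r.
Qed.

Lemma coord_pow_deg (f : {poly F}) : map_poly (in_alg L) f = minPoly 1 y ->
  forall i : 'I_n, crd i (y ^+ n) = - f`_i.
Proof.
move=> fm i.
have sz : size (minPoly 1 y) = n.+1 by rewrite size_minPoly adjoin_degree_gen.
have := minPolyxx 1 y; rewrite horner_coef sz big_ord_recr /=.
have -> : (minPoly 1 y)`_n = 1.
  by have := monicP (monic_minPoly 1 y); rewrite lead_coefE sz.
rewrite mul1r => /eqP; rewrite addrC addr_eq0 => /eqP ->.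
have -> : - \sum_(j < n) (minPoly 1 y)`_j * y ^+ j = \sum_(j < n) (- f`_j) *: y ^+ j.
  rewrite -sumrN; apply: eq_bigr => j _.
  by rewrite -fm coef_map /= mulr_algl scaleNr.
by rewrite pow_coord.
Qed.
End Generator.
End PowerBasis.

Section BaseChange.
Variables (F : fieldType) (L : fieldExtType F) (lam : L) (n : nat).
Hypotheses (ch2 : 2%N \in [pchar F]) (gen : <<1; lam>>%VS = fullv)
  (sep : separable_element 1 lam) (dimL : \dim {:L} = n).

Lemma pchar2_ext : 2%N \in [pchar L].
Proof. exact: (rmorph_pchar (in_alg L) ch2). Qed.

(* In characteristic 2 a separable lam lies in F(lam^2), so L = F(lam^2). *)
Lemma gen_sqr : <<1; lam ^+ 2>>%VS = fullv.
Proof.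
have := sep; rewrite (@pcharf_p_separable _ _ _ _ 0 2 pchar2_ext) expn1 => H.
by apply/eqP; rewrite eqEsubv subvf /= -gen sub_adjoin1v.
Qed.

Local Notation crd2 := (coord (pow_basis n (lam ^+ 2))).

Lemma sqr_sum m (G : 'I_m -> L) : (\sum_i G i) ^+ 2 = \sum_i G i ^+ 2.
Proof.
apply: (big_morph (fun x : L => x ^+ 2)); last by rewrite expr0n.
by move=> x y; rewrite sqrrD_char2 // pchar2_ext.
Qed.

(* b_K(sum_j T_ij lam^j) = sum_j b(T_.j) (lam^2)^j: Frobenius is additive. *)
Lemma ts_map_pow d (b : 'rV[F]_d) (T : 'I_d -> 'I_n -> F) :
  ts_form (map_mx (in_alg L) b) (\row_i \sum_j T i j *: lam ^+ j) =
  \sum_j ts_form b (\row_i T i j) *: (lam ^+ 2) ^+ j.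
Proof.
rewrite /ts_form.
transitivity (\sum_i \sum_j (b 0 i * T i j ^+ 2) *: (lam ^+ 2) ^+ j).
  apply: eq_bigr => i _; rewrite !mxE sqr_sum mulr_sumr; apply: eq_bigr => j _.
  by rewrite exprZn mulr_algl scalerA exprAC.
rewrite exchange_big /=; apply: eq_bigr => j _; rewrite scaler_suml.
by apply: eq_bigr => i _; rewrite mxE.
Qed.

Lemma represents_ext d (b : 'rV[F]_d) (x : L) :
  represents (ts_form (map_mx (in_alg L) b)) x <->
  forall j, represents (ts_form b) (crd2 j x).
Proof.
split.
  move=> [y ->] j.
  have -> : y = \row_i \sum_j coord (pow_basis n lam) j (y 0 i) *: lam ^+ j.
    by apply/rowP => i; rewrite mxE -pow_expand.
  rewrite ts_map_pow pow_coord ?gen_sqr //.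
  by exists (\row_i coord (pow_basis n lam) j (y 0 i)).
move=> H; have [z Hz] := fin_all_exists H.
exists (\row_i \sum_j z j 0 i *: lam ^+ j).
rewrite ts_map_pow {1}(pow_expand dimL gen_sqr x).
apply: eq_bigr => j _; rewrite Hz; congr (ts_form _ _ *: _).
by apply/rowP => i; rewrite mxE.
Qed.
End BaseChange.

Section Transfer.
Variables (F : fieldType) (L : fieldExtType F).
Hypothesis ch2L : 2%N \in [pchar L].

Lemma ts_ext_row d (b : 'rV[F]_d) (y : {ffun 'I_d -> L}) :
  ts_ext b y = ts_form (map_mx (in_alg L) b) (\row_i y i).
Proof. by rewrite /ts_ext /ts_form; apply: eq_bigr => i _; rewrite !mxE. Qed.

Lemma represents_ts_ext d (b : 'rV[F]_d) x :
  (exists y, x = ts_ext b y) <-> represents (ts_form (map_mx (in_alg L) b)) x.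
Proof.
split => [[y ->]|[r ->]]; first by exists (\row_i y i); rewrite ts_ext_row.
exists [ffun i => r 0 i]; rewrite ts_ext_row; congr ts_form.
by apply/rowP => i; rewrite !mxE ffunE.
Qed.

Lemma ts_extD d (b : 'rV[F]_d) (x y : {ffun 'I_d -> L}) :
  ts_ext b (x + y) = ts_ext b x + ts_ext b y.
Proof.
rewrite /ts_ext -big_split; apply: eq_bigr => i _.
by rewrite ffunE sqrrD_char2 // mulrDr.
Qed.

Lemma ts_extZ d (b : 'rV[F]_d) (c : F) (x : {ffun 'I_d -> L}) :
  ts_ext b (c *: x) = c ^+ 2 *: ts_ext b x.
Proof.
rewrite /ts_ext scaler_sumr; apply: eq_bigr => i _.
by rewrite ffunE exprZn -scalerAr.
Qed.

Lemma transfer_qiso d1 d2 (b1 : 'rV[F]_d1) (b2 : 'rV[F]_d2) (lam : L) (s : L -> F) :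
  qiso (ts_form (map_mx (in_alg L) b1))
       (qscale lam (ts_form (map_mx (in_alg L) b2))) ->
  qiso (transfer s (ts_ext b1)) (transfer s (fun x => lam * ts_ext b2 x)).
Proof.
move=> [g [[g' gK g'K] Hg]].
have rowD m (x y : {ffun 'I_m -> L}) (c : F) :
    \row_j (c *: x + y) j = (c%:A : L) *: \row_j x j + \row_j y j.
  by apply/rowP => j; rewrite !mxE !ffunE mulr_algl.
have [h Hh] : exists h : {linear {ffun 'I_d1 -> L} -> {ffun 'I_d2 -> L}},
    forall x, h x = [ffun i => g (\row_j x j) 0 i].
  apply: linear_of => c x y; apply/ffunP => i.
  by rewrite [LHS]ffunE rowD linearP /= !ffunE !mxE mulr_algl.
have rowh x : \row_i (h x) i = g (\row_j x j).
  by apply/rowP => i; rewrite !mxE Hh ffunE.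
exists h; split.
  exists (fun y : {ffun 'I_d2 -> L} => [ffun j => g' (\row_i y i) 0 j]) => x.
    by apply/ffunP => j; rewrite ffunE rowh gK mxE.
  apply/ffunP => j; rewrite Hh ffunE.
  have -> : \row_j [ffun j => g' (\row_i x i) 0 j] j = g' (\row_i x i).
    by apply/rowP => i; rewrite !mxE ffunE.
  by rewrite g'K mxE.
move=> x; rewrite /transfer ts_ext_row rowh.
by have := Hg (\row_j x j); rewrite /qscale => ->; rewrite ts_ext_row.
Qed.

Lemma represents_transfer_ext d (b : 'rV[F]_d) (s : L -> F) z :
  represents (transfer s (ts_ext b)) z <->
  exists2 x, represents (ts_form (map_mx (in_alg L) b)) x & z = s x.
Proof.
split => [[y ->]|[x /represents_ts_ext [y ->] ->]]; last by exists y.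
by exists (ts_ext b y) => //; apply/represents_ts_ext; exists y.
Qed.

Lemma represents_transfer_lam_ext d (b : 'rV[F]_d) (lam : L) (s : L -> F) z :
  represents (transfer s (fun x => lam * ts_ext b x)) z <->
  exists2 x, represents (ts_form (map_mx (in_alg L) b)) x & z = s (lam * x).
Proof.
split => [[y ->]|[x /represents_ts_ext [y ->] ->]]; last by exists y.
by exists (ts_ext b y) => //; apply/represents_ts_ext; exists y.
Qed.

Section Quasilinear.
Variables (V : vectType F) (s : L -> F) (q : V -> L).
Hypotheses (sD : forall x y, s (x + y) = s x + s y)
  (sZ : forall (c : F) (x : L), s (c *: x) = c * s x).

Lemma transferD : (forall x y, q (x + y) = q x + q y) ->
  forall x y, transfer s q (x + y) = transfer s q x + transfer s q y.
Proof. by move=> qD x y; rewrite /transfer qD sD. Qed.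

Lemma transferZ : (forall (c : F) x, q (c *: x) = c ^+ 2 *: q x) ->
  forall c x, transfer s q (c *: x) = c ^+ 2 * transfer s q x.
Proof. by move=> qZ c x; rewrite /transfer qZ sZ. Qed.
End Quasilinear.
End Transfer.

Section Multiplier.
Variable F : fieldType.
Hypothesis ch2 : 2%N \in [pchar F].
Variables (d : nat) (b : 'rV[F]_d).

Definition multiplier (t : F) : Prop :=
  forall v, represents (ts_form b) v -> represents (ts_form b) (t * v).

Lemma multiplier0 : multiplier 0.
Proof. by move=> v _; rewrite mul0r; exact: represents0. Qed.

Lemma multiplier1 : multiplier 1.
Proof. by move=> v; rewrite mul1r. Qed.

Lemma multiplierD s t : multiplier s -> multiplier t -> multiplier (s + t).
Proof. by move=> Hs Ht v Hv; rewrite mulrDl; apply: representsD; auto. Qed.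

Lemma multiplierM s t : multiplier s -> multiplier t -> multiplier (s * t).
Proof. by move=> Hs Ht v Hv; rewrite -mulrA; auto. Qed.

Lemma multiplier_sqr t : multiplier (t ^+ 2).
Proof. by move=> v Hv; apply: representsZ. Qed.

Lemma multiplierV t : t != 0 -> multiplier t -> multiplier t^-1.
Proof.
move=> t0 Ht v /(multiplier_onto ch2 t0 Ht) [u Hu ->].
by rewrite mulrA mulVf // mul1r.
Qed.

Lemma multiplier_sum (I : finType) (G : I -> F) :
  (forall i, multiplier (G i)) -> multiplier (\sum_i G i).
Proof.
move=> H; apply: (big_ind multiplier) => //.
  exact: multiplier0.
exact: multiplierD.
Qed.

(* Determinants and cofactors of matrices over E(b) lie in E(b); all signs
   are 1 in characteristic 2. *)
Lemma multiplier_det m (A : 'M[F]_m) :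
  (forall i j, multiplier (A i j)) -> multiplier (\det A).
Proof.
move=> H; apply: multiplier_sum => s; rewrite oppr_char2 // expr1n mul1r.
by apply: (big_ind multiplier) => //; [exact: multiplier1 | exact: multiplierM].
Qed.

Lemma multiplier_cofactor m (A : 'M[F]_m) i j :
  (forall i j, multiplier (A i j)) -> multiplier (cofactor A i j).
Proof.
move=> H; rewrite /cofactor oppr_char2 // expr1n mul1r.
by apply: multiplier_det => i' j'; rewrite !mxE.
Qed.

(* Only the parity of r matters for mu^r E(b) since E(b) contains F^2. *)
Lemma multiplier_pow_even (mu t : F) r : ~~ odd r -> multiplier t ->
  multiplier (mu ^+ r * t).
Proof.
move=> er Ht; rewrite -[r]odd_double_half (negPf er) add0n -mul2n exprM exprAC.
exact/multiplierM/Ht/multiplier_sqr.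
Qed.

Lemma multiplier_pow_odd (mu t : F) r : odd r -> multiplier t ->
  exists2 u, multiplier u & mu ^+ r * t = mu * u.
Proof.
move=> or Ht; exists ((mu ^+ r./2) ^+ 2 * t).
  exact/multiplierM/Ht/multiplier_sqr.
by rewrite -{1}[r]odd_double_half or exprD expr1 -mul2n exprM -mulrA exprAC.
Qed.

Lemma G0_self (c : F) : G0 (ts_form b) (ts_form b) c <-> multiplier c.
Proof.
rewrite G0_ts //; split=> [[->|[c0 Hc]]|Hc]; first exact: multiplier0.
  exact/(multiplier_eq ch2 _ c0).
have [->|c0] := eqVneq c 0; [by left | right; split => //].
exact/(multiplier_eq ch2 _ c0).
Qed.
End Multiplier.

Section ExtMultiplier.
Variables (F : fieldType) (L : fieldExtType F) (lam : L) (n : nat).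
Hypotheses (ch2 : 2%N \in [pchar F]) (gen : <<1; lam>>%VS = fullv)
  (sep : separable_element 1 lam) (dimL : \dim {:L} = n).
Variables (d : nat) (b : 'rV[F]_d).
Local Notation crd2 := (coord (pow_basis n (lam ^+ 2))).
Local Notation DK := (represents (ts_form (map_mx (in_alg L) b))).
Local Notation represents_ext := (represents_ext ch2 gen sep dimL).
Local Notation gen2 := (gen_sqr ch2 gen sep).

Definition multiplier_ext (x : L) : Prop := forall j, multiplier b (crd2 j x).

Lemma represents_ext_alg (v : F) : represents (ts_form b) v -> DK v%:A.
Proof.
move=> Hv; apply/represents_ext => j.
rewrite (pow_coord_alg dimL gen2) //.
by case: (_ == _); rewrite ?mulr1 ?mulr0 //; exact: represents0.
Qed.

Lemma represents_ext_sqr (y p : L) : DK p -> DK (y ^+ 2 * p).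
Proof.
by move=> [z ->]; exists (y *: z); rewrite tsZ // (pchar2_ext L ch2).
Qed.

Lemma represents_ext_scale (t : F) p : multiplier b t -> DK p -> DK (t *: p).
Proof.
move=> Ht /represents_ext Hp; apply/represents_ext => j.
by rewrite linearZ /=; apply: Ht.
Qed.

Lemma represents_ext_sum m (G : 'I_m -> L) : (forall i, DK (G i)) -> DK (\sum_i G i).
Proof.
move=> H; apply: (big_ind DK) => //; first by exists 0; rewrite ts0.
by move=> x y [u ->] [v ->]; exists (u + v); rewrite tsD // (pchar2_ext L ch2).
Qed.

Lemma multiplier_extP x : multiplier_ext x <-> forall p, DK p -> DK (x * p).
Proof.
split=> [Hx p Hp|H j v Hv].
  rewrite (pow_expand dimL gen2 x) mulr_suml.
  apply: represents_ext_sum => i; rewrite -scalerAl.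
  apply: represents_ext_scale; first exact: Hx.
  by rewrite -exprM mulnC exprM; apply: represents_ext_sqr.
have := H _ (represents_ext_alg Hv); rewrite mulr_algr => /represents_ext /(_ j).
by rewrite linearZ /= mulrC.
Qed.

Lemma multiplier_extX x m : multiplier_ext x -> multiplier_ext (x ^+ m).
Proof.
move=> /multiplier_extP Hx; apply/multiplier_extP.
by elim: m => [|m IH] p Hp; rewrite ?expr0 ?mul1r // exprS -mulrA; auto.
Qed.

(* Cramer's rule: if be = mu^-1 lam multiplies D(b_K), then the powers of be
   form an E(b)-basis of the multiplier_ext elements, so the lam-coordinates
   of such an x satisfy coord_i(x) mu^i in E(b). *)
Section Cramer.
Variable mu : F.
Hypotheses (mu0 : mu != 0) (mult_be : multiplier_ext (mu^-1 *: lam)).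
Local Notation be := (mu^-1 *: lam).
Local Notation crd := (coord (pow_basis n lam)).

Definition be_pow_mx : 'M[F]_n := \matrix_(i, j) crd2 j (be ^+ i).

Lemma be_pow_mx_row (r : 'rV[F]_n) :
  r *m be_pow_mx = \row_j crd2 j (\sum_k (r 0 k * mu^-1 ^+ k) *: lam ^+ k).
Proof.
apply/rowP => j; rewrite !mxE linear_sum; apply: eq_bigr => k _.
by rewrite linearZ /= !mxE exprZn linearZ /= mulrA.
Qed.

Lemma be_pow_mx_unit : \det be_pow_mx != 0.
Proof.
rewrite -unitfE -unitmxE -row_free_unit -kermx_eq0.
apply/eqP/row_matrixP => i; rewrite row0; set r := row i (kermx _).
have rC : r *m be_pow_mx = 0 by rewrite /r -row_mul mulmx_ker row0.
set y := \sum_k (r 0 k * mu^-1 ^+ k) *: lam ^+ k.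
have y0 : y = 0.
  apply: (pow_coord_inj dimL gen2) => j; rewrite linear0.
  by have := congr1 (fun M : 'rV_n => M 0 j) rC; rewrite be_pow_mx_row !mxE.
apply/rowP => k; have := congr1 (crd k) y0; rewrite /y pow_coord // linear0.
move=> /eqP; rewrite mulf_eq0 expf_eq0 invr_eq0 (negPf mu0) andbF orbF.
by move=> /eqP ->; rewrite mxE.
Qed.

Lemma multiplier_ext_coord x : multiplier_ext x ->
  forall i, multiplier b (crd i x * mu ^+ i).
Proof.
move=> Hx i.
set e := (\det be_pow_mx)^-1 *: ((\row_j crd2 j x) *m \adj be_pow_mx).
have eC : e *m be_pow_mx = \row_j crd2 j x.
  rewrite /e -scalemxAl -mulmxA mul_adj_mx mul_mx_scalar scalerA mulVf ?scale1r //.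
  exact: be_pow_mx_unit.
have mult_pow i' j : multiplier b (be_pow_mx i' j).
  by rewrite mxE; apply: multiplier_extX.
have mult_e k : multiplier b (e 0 k).
  rewrite /e mxE; apply: multiplierM.
    by apply/(multiplierV ch2 be_pow_mx_unit)/(multiplier_det ch2) => i' j'.
  rewrite mxE; apply: (multiplier_sum ch2) => l; apply: multiplierM.
    by rewrite mxE; exact: Hx.
  by rewrite mxE; apply: (multiplier_cofactor ch2) => i' j'.
have xe : x = \sum_k (e 0 k * mu^-1 ^+ k) *: lam ^+ k.
  apply: (pow_coord_inj dimL gen2) => j.
  by have := congr1 (fun M : 'rV_n => M 0 j) eC; rewrite be_pow_mx_row !mxE.
rewrite xe pow_coord // -mulrA -exprMn mulVf // expr1n mulr1.
exact: mult_e.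
Qed.

Lemma coord_lamX m i :
  exists2 t, multiplier b t & crd i (lam ^+ m) * mu ^+ i = mu ^+ m * t.
Proof.
exists (crd i (be ^+ m) * mu ^+ i).
  exact/multiplier_ext_coord/multiplier_extX.
have -> : lam ^+ m = mu ^+ m *: be ^+ m by rewrite -exprZn scalerA mulfV ?scale1r.
by rewrite linearZ /= mulrA.
Qed.
End Cramer.
End ExtMultiplier.

Section ScaledValues.
Variable F : fieldType.
Hypothesis ch2 : 2%N \in [pchar F].
Variables (d1 d2 : nat) (alpha : 'rV[F]_d1) (beta : 'rV[F]_d2) (r : F).
Hypotheses (r0 : r != 0) (values_scaled : forall w, represents (ts_form alpha) w <->
  exists2 v, represents (ts_form beta) v & w = r * v).
Local Notation Dphi := (represents (ts_form alpha)).
Local Notation Dpsi := (represents (ts_form beta)).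

Lemma values_rescale u : u != 0 -> multiplier beta u ->
  forall w, Dphi w <-> exists2 v, Dpsi v & w = (r * u) * v.
Proof.
move=> u0 Hu w; rewrite values_scaled; split => -[v Hv ->].
  by have [v' Hv' ->] := multiplier_onto ch2 u0 Hu Hv; exists v'; rewrite ?mulrA.
by exists (u * v); [exact: Hu | rewrite mulrA].
Qed.

Lemma multiplier_scaled t : multiplier alpha t <-> multiplier beta t.
Proof.
split => H.
  move=> v Hv; have /values_scaled [v' Hv' e] : Dphi (t * (r * v)).
    by apply: H; apply/values_scaled; exists v.
  suff -> : t * v = v' by [].
  by apply: (mulfI r0); rewrite mulrCA e.
move=> w /values_scaled [v Hv ->]; apply/values_scaled; exists (t * v).
  exact: H.
by rewrite mulrCA.
Qed.

Lemma G0_self_scaled c :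
  G0 (ts_form alpha) (ts_form alpha) c <-> G0 (ts_form beta) (ts_form beta) c.
Proof. by rewrite !G0_self // multiplier_scaled. Qed.

Hypothesis dim_eq : d1 = d2.

Lemma G0_scaled c : G0 (ts_form alpha) (ts_form beta) c <->
  exists2 c', G0 (ts_form beta) (ts_form beta) c' & c = r * c'.
Proof.
rewrite G0_ts //; split.
  move=> [->|[c0 Hc]]; first by exists 0; [exact/G0_self/multiplier0 | rewrite mulr0].
  exists (c / r); last by rewrite mulrC divfK.
  apply/G0_self => // v Hv; have /values_scaled [v' Hv' e] : Dphi (c * v).
    by apply/Hc; exists v.
  by rewrite mulrAC e mulrAC mulfV // mul1r.
move=> [c' /(G0_self ch2) Hc' ->].
have [->|c'0] := eqVneq c' 0; first by left; rewrite mulr0.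
right; split; first by rewrite mulf_neq0.
exact: values_rescale.
Qed.

Lemma G0_scaled_multiplier u : multiplier beta u ->
  G0 (ts_form alpha) (ts_form beta) (r * u).
Proof. by move=> Hu; apply/G0_scaled; exists u => //; apply/G0_self. Qed.
End ScaledValues.

Section Lemma64.
Variables (F : fieldType) (L : fieldExtType F) (lam : L) (n : nat).
Hypotheses (ch2 : 2%N \in [pchar F]) (gen : <<1; lam>>%VS = fullv)
  (sep : separable_element 1 lam) (dimL : \dim {:L} = n) (lam0 : lam != 0).
Variables (d1 d2 : nat) (alpha : 'rV[F]_d1) (beta : 'rV[F]_d2).
Local Notation crd := (coord (pow_basis n lam)).
Local Notation crd2 := (coord (pow_basis n (lam ^+ 2))).
Local Notation Dphi := (represents (ts_form alpha)).
Local Notation Dpsi := (represents (ts_form beta)).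
Local Notation DphiK := (represents (ts_form (map_mx (in_alg L) alpha))).
Local Notation DpsiK := (represents (ts_form (map_mx (in_alg L) beta))).
Local Notation represents_ext := (represents_ext ch2 gen sep dimL).
Local Notation represents_ext_alg := (represents_ext_alg ch2 gen sep dimL).
Local Notation gen2 := (gen_sqr ch2 gen sep).
Local Notation ch2L := (pchar2_ext L ch2).
Hypothesis values_phiK : forall x, DphiK x <-> exists2 p, DpsiK p & x = lam * p.

(* Reading D(phi_K) = lam D(psi_K) on constants v and on the j-th
   (lam^2)-coordinate gives crd2_j(lam) D(psi) <= D(phi) and
   crd2_j(lam^-1) D(phi) <= D(psi). *)
Lemma coord_lam_values j v : Dpsi v -> Dphi (crd2 j lam * v).
Proof.
move=> /represents_ext_alg Hv.
have : DphiK (lam * v%:A) by apply/values_phiK; exists v%:A.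
by rewrite mulr_algr => /represents_ext /(_ j); rewrite linearZ /= mulrC.
Qed.

Lemma coord_lamV_values j w : Dphi w -> Dpsi (crd2 j lam^-1 * w).
Proof.
move=> /represents_ext_alg /values_phiK [p Hp e].
have ep : p = w *: lam^-1 by rewrite -mulr_algr e mulrA mulVf // mul1r.
by move: Hp; rewrite ep => /represents_ext /(_ j); rewrite linearZ /= mulrC.
Qed.

Lemma mu_exists : exists mu, [/\ mu != 0,
  (forall w, Dphi w <-> exists2 v, Dpsi v & w = mu * v)
  & multiplier_ext lam n beta (mu^-1 *: lam)].
Proof.
have [j0 mu0] := pow_coord_neq0 dimL gen2 lam0; set mu := crd2 j0 lam.
have [j1 nu0] : exists j, crd2 j lam^-1 != 0.
  by apply: (pow_coord_neq0 dimL gen2); rewrite invr_eq0.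
set nu := crd2 j1 lam^-1.
have values_mu w : Dphi w <-> exists2 v, Dpsi v & w = mu * v.
  split; last by move=> [v Hv ->]; exact: coord_lam_values.
  move=> Hw; have st : multiplier beta (nu * mu).
    by move=> v Hv; rewrite -mulrA; apply/coord_lamV_values/coord_lam_values.
  have [u Hu e] :=
    multiplier_onto ch2 (mulf_neq0 nu0 mu0) st (coord_lamV_values j1 Hw).
  by exists u => //; apply: (mulfI nu0); rewrite e mulrA.
exists mu; split => //; apply/(multiplier_extP ch2 gen sep dimL) => p Hp.
have /represents_ext Hq : DphiK (lam * p) by apply/values_phiK; exists p.
apply/represents_ext => j; have [v Hv e] := (proj1 (values_mu _)) (Hq j).
by rewrite -scalerAl linearZ /= e mulrA mulVf // mul1r.
Qed.

Section Mu.
Variable mu : F.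
Hypotheses (mu0 : mu != 0)
  (values_mu : forall w, Dphi w <-> exists2 v, Dpsi v & w = mu * v)
  (mult_be : multiplier_ext lam n beta (mu^-1 *: lam)).
Variable s : L -> F.
Hypotheses (sD : forall x y, s (x + y) = s x + s y)
  (sZ : forall (c : F) (x : L), s (c *: x) = c * s x) (s1 : s 1 = 1)
  (slam : forall i, (1 <= i < n)%N -> s (lam ^+ i) = 0).

Lemma s_sum m (G : 'I_m -> L) : s (\sum_i G i) = \sum_i s (G i).
Proof.
have s0 : s 0 = 0 by have := sZ 0 0; rewrite scale0r mul0r.
exact: (big_morph s sD s0).
Qed.

Lemma s_coord0 x : s x = crd (Ordinal (n_gt0 dimL gen)) x.
Proof.
rewrite {1}(pow_expand dimL gen x) s_sum.
rewrite (bigD1 (Ordinal (n_gt0 dimL gen))) //= big1 ?addr0 ?sZ ?expr0 ?s1 ?mulr1 //.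
move=> i ni; rewrite sZ slam ?mulr0 // ltn_ord andbT lt0n.
by apply: contra ni => /eqP e; apply/eqP/val_inj.
Qed.

Lemma s_lamX m : exists2 t, multiplier beta t & s (lam ^+ m) = mu ^+ m * t.
Proof.
have [t Ht e] := coord_lamX ch2 gen sep dimL mu0 mult_be m (Ordinal (n_gt0 dimL gen)).
by exists t => //; rewrite s_coord0 -e expr0 mulr1.
Qed.

Lemma s_lamX_even m : ~~ odd m -> multiplier beta (s (lam ^+ m)).
Proof. by move=> em; have [t Ht ->] := s_lamX m; exact: multiplier_pow_even. Qed.

Lemma s_lamX_odd m :
  odd m -> exists2 u, multiplier beta u & s (lam ^+ m) = mu * u.
Proof. by move=> om; have [t Ht ->] := s_lamX m; exact: multiplier_pow_odd. Qed.

Lemma G0_s_lamX (dim_eq : d1 = d2) m :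
  (~~ odd m -> G0 (ts_form beta) (ts_form beta) (s (lam ^+ m))) /\
  (odd m -> G0 (ts_form alpha) (ts_form beta) (s (lam ^+ m))).
Proof.
split => [/s_lamX_even|/s_lamX_odd [u Hu ->]].
  exact: (proj2 (G0_self ch2 beta _)).
exact: (G0_scaled_multiplier ch2 mu0 values_mu).
Qed.

(* s maps D(phi_K) onto D(phi): s(x) = sum_j crd2_j(x) s(lam^(2j)) with
   crd2_j(x) in D(phi) and s(lam^(2j)) in E(psi) = E(phi). *)
Lemma represents_transfer_phiK z : (exists2 x, DphiK x & z = s x) <-> Dphi z.
Proof.
split => [[x Hx ->]|Hz]; last first.
  by exists z%:A; [exact: represents_ext_alg | rewrite sZ s1 mulr1].
rewrite (pow_expand dimL gen2 x) s_sum; apply: (represents_sum ch2) => j.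
rewrite sZ mulrC; apply: (proj2 (multiplier_scaled mu0 values_mu _)).
  by rewrite -exprM; apply: s_lamX_even; rewrite oddM.
exact: (proj1 (represents_ext _ x) Hx j).
Qed.

Lemma represents_transfer_phi z :
  represents (transfer s (ts_ext alpha)) z <-> Dphi z.
Proof. by rewrite represents_transfer_ext represents_transfer_phiK. Qed.

Lemma represents_transfer_lam_psi z :
  represents (transfer s (fun x => lam * ts_ext beta x)) z <-> Dphi z.
Proof.
rewrite represents_transfer_lam_ext -represents_transfer_phiK.
split => [[p Hp ->]|[x /values_phiK [p Hp ->] ->]]; last by exists p.
by exists (lam * p) => //; apply/values_phiK; exists p.
Qed.

Lemma witt_phi_transfer : witt_equiv (ts_form alpha) (transfer s (ts_ext alpha)).
Proof.
apply/witt_equiv_sym/(quasilinear_witt ch2).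
- exact/(transferD sD)/(ts_extD ch2L).
- exact/(transferZ sZ)/ts_extZ.
- exact: represents_transfer_phi.
Qed.

Variables (f : {poly F}) (k : nat) (a : F).
Hypotheses (minpoly_f : map_poly (in_alg L) f = minPoly 1 lam) (k_odd : odd k)
  (k_le : (1 <= k <= n)%N) (a_coef : a = f`_(n - k)) (a0 : a != 0).

(* Comparing coordinate n - k of lam^n: a = -a lies in mu^k E(psi) = mu E(psi). *)
Lemma a_in_mu_multiplier : exists2 u, multiplier beta u & a = mu * u.
Proof.
case/andP: k_le => k1 kn.
have nk : (n - k < n)%N by rewrite ltn_subrL k1 (leq_trans k1 kn).
have [t Ht e] := coord_lamX ch2 gen sep dimL mu0 mult_be n (Ordinal nk).
move: e; rewrite (coord_pow_deg dimL gen minpoly_f) /= -a_coef oppr_char2 //.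
rewrite -{2}(subnKC kn) exprD mulrAC => /(mulIf (expf_neq0 _ mu0)) ->.
exact: multiplier_pow_odd.
Qed.

Lemma values_phi_a w : Dphi w <-> exists2 v, Dpsi v & w = a * v.
Proof.
have [u Hu au] := a_in_mu_multiplier.
have u0 : u != 0 by apply: contraNneq a0 => u0; rewrite au u0 mulr0.
by rewrite au; exact: (values_rescale ch2 values_mu u0 Hu).
Qed.

Lemma witt_transfer_scaled :
  witt_equiv (transfer s (fun x => lam * ts_ext beta x)) (qscale a (ts_form beta)).
Proof.
have iso : qiso (qscale a (ts_form beta)) (ts_form (a *: beta)).
  exact: qiso_eqr (ts_scale beta a) (qiso_refl _).
apply: (witt_qisor _ iso); apply: (quasilinear_witt ch2).
- by apply: (transferD sD) => x y; rewrite (ts_extD ch2L) mulrDr.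
- by apply: (transferZ sZ) => c x; rewrite ts_extZ scalerAr.
- move=> z; rewrite represents_transfer_lam_psi values_phi_a -(qiso_represents iso).
  by rewrite represents_qscale.
Qed.
End Mu.
End Lemma64.

Unset Implicit Arguments. Set Strict Implicit.

Theorem lemma6p4 (F : fieldType) (L : fieldExtType F) (lam : L) (n : nat)
  (f : {poly F}) (k : nat) (a : F) (s : L -> F)
  (d1 d2 : nat) (alpha : 'rV[F]_d1) (beta : 'rV[F]_d2) :
  2%N \in [pchar F] ->
  <<1; lam>>%VS = fullv ->
  separable_element 1%VS lam ->
  lam != 0 ->
  \dim {:L} = n ->
  map_poly (in_alg L) f = minPoly 1 lam ->
  odd k -> (1 <= k <= n)%N -> a = f`_(n - k) -> a != 0 ->
  (forall x y, s (x + y) = s x + s y) ->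
  (forall (c : F) (x : L), s (c *: x) = c * s x) ->
  s 1 = 1 ->
  (forall i, (1 <= i < n)%N -> s (lam ^+ i) = 0) ->
  (* phi_K ~= lam psi_K over L *)
  qiso (ts_form (map_mx (in_alg L) alpha))
       (qscale lam (ts_form (map_mx (in_alg L) beta))) ->
  [/\ (forall c, G0 (ts_form alpha) (ts_form alpha) c <->
                 G0 (ts_form beta) (ts_form beta) c),
      (forall c, G0 (ts_form alpha) (ts_form beta) c <->
                 exists2 c', G0 (ts_form beta) (ts_form beta) c' & c = a * c'),
      (forall m : nat,
         (~~ odd m -> G0 (ts_form beta) (ts_form beta) (s (lam ^+ m))) /\
         (odd m -> G0 (ts_form alpha) (ts_form beta) (s (lam ^+ m))))
    & [/\ witt_equiv (ts_form alpha) (transfer s (ts_ext alpha)),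
      qiso (transfer s (ts_ext alpha))
           (transfer s (fun x => lam * ts_ext beta x))
    & witt_equiv (transfer s (fun x => lam * ts_ext beta x))
                 (qscale a (ts_form beta))]].
Proof.
move=> ch2 gen sep lam0 dimL fmin k_odd k_le a_coef a0 sD sZ s1 slam iso.
have dim_eq : d1 = d2 := qiso_dim iso.
have values_phiK x : represents (ts_form (map_mx (in_alg L) alpha)) x <->
    exists2 p, represents (ts_form (map_mx (in_alg L) beta)) p & x = lam * p.
  by rewrite (qiso_represents iso) represents_qscale.
have [mu [mu0 values_mu mult_be]] := mu_exists ch2 gen sep dimL lam0 values_phiK.
have values_a :=
  values_phi_a ch2 gen sep dimL mu0 values_mu mult_be fmin k_odd k_le a_coef a0.
split.
- move=> c; exact: (G0_self_scaled ch2 mu0 values_mu c).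
- move=> c; exact: (G0_scaled ch2 a0 values_a dim_eq c).
- move=> m; exact: (G0_s_lamX ch2 gen sep dimL mu0 values_mu mult_be sD sZ s1 slam
    dim_eq m).
split.
- exact: (witt_phi_transfer ch2 gen sep dimL mu0 values_mu mult_be sD sZ s1 slam).
- exact: transfer_qiso iso.
- exact: (witt_transfer_scaled ch2 gen sep dimL values_phiK mu0 values_mu mult_be
    sD sZ s1 slam fmin k_odd k_le a_coef a0).
Qed.
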